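(* Let $D$ be a friendship digraph of order $n$. Then $\bigl(d^-(u)-1\bigr)\bigl(d^-(v)-1\bigr)\leq n-2$ for any two distinct vertices $u$ and $v$ of $D$.
   Context: All digraphs are finite and have neither loops nor parallel arcs (a pair of opposite arcs $(u,v)$ and $(v,u)$ is allowed). $d^-(v)$ is the indegree of $v$. A friendship digraph is a nontrivial digraph (at least two vertices) in which any two distinct vertices have exactly one common out-neighbor. *)

From mathcomp Require Import all_boot all_order all_algebra.
Set Implicit Arguments. Unset Strict Implicit. Unset Printing Implicit Defensive.

(* A digraph on a finite vertex type T is given by its arc relation e:
   e u v means there is an arc (u,v).
   Parallel arcs are impossible by construction; opposite arcs allowed. *)
Definition loopless (T : finType) (e : rel T) : Prop := forall v, ~~ e v v.

Definition indeg (T : finType) (e : rel T) (v : T) : nat := #|[set u | e u v]|.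

Definition common_out (T : finType) (e : rel T) (x y : T) : {set T} :=
  [set z | e x z && e y z].

Definition friendship_digraph (T : finType) (e : rel T) : Prop :=
  [/\ loopless e, 2 <= #|T| &
      forall x y : T, x != y -> #|common_out e x y| = 1].

(* Let A and B be the in-neighbourhoods of u and v. Two distinct vertices have
   exactly one common out-neighbour, so A and B share at most one vertex (two
   such vertices would have both u and v as common out-neighbours). Sending a
   pair (x, y) of (A \ B) x (B \ A) to the common out-neighbour of x and y
   avoids u and v, and it is injective: if (x, y) and (x', y') have the same
   image w, then x and x' have both u and w as common out-neighbours, so x = x',
   and likewise y = y'. Hence (|A| - 1)(|B| - 1) <= |A \ B| |B \ A| <= n - 2
   when A and B are nonempty; otherwise the left side is at most 1, and n >= 3
   because the common out-neighbour of u and v is a third vertex. *)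

From mathcomp Require Import all_boot all_order all_algebra.
From mathcomp Require Import zify.
Set Implicit Arguments. Unset Strict Implicit.

Section FriendshipDigraph.

Variables (T : finType) (e : rel T).
Hypothesis common_out1 : forall x y : T, x != y -> #|common_out e x y| = 1.

Definition common_succ (x y : T) : T := odflt x [pick z in common_out e x y].

Definition in_nbrs (v : T) : {set T} := [set x | e x v].

Lemma common_outE x y : x != y -> common_out e x y = [set common_succ x y].
Proof.
move=> /common_out1/eqP/cards1P[z def_z]; rewrite def_z /common_succ.
by case: pickP => [w|/(_ z)]; rewrite def_z ?set11 // => /set1P->.
Qed.

Lemma common_succP x y z :
  x != y -> reflect (z = common_succ x y) (e x z && e y z).
Proof.
move=> /common_outE def_xy.
by have := @set1P _ z (common_succ x y); rewrite -def_xy inE.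
Qed.

Lemma common_succ_arcs x y :
  x != y -> e x (common_succ x y) /\ e y (common_succ x y).
Proof. by move=> nxy; apply/andP/(common_succP _ nxy). Qed.

Lemma common_in_nbr_uniq x x' w w' :
  w != w' -> e x w -> e x' w -> e x w' -> e x' w' -> x = x'.
Proof.
move=> nww' exw ex'w exw' ex'w'; apply/eqP/negPn/negP => nxx'.
have /(common_succP _ nxx') def_w : e x w && e x' w by apply/andP.
have /(common_succP _ nxx') def_w' : e x w' && e x' w' by apply/andP.
by move: nww'; rewrite def_w def_w' eqxx.
Qed.

Lemma card_in_nbrsI_le1 u v : u != v -> #|in_nbrs u :&: in_nbrs v| <= 1.
Proof.
move=> nuv; rewrite leqNgt; apply/card_gt1P => -[z [z' [+ + nzz']]].
rewrite !inE => /andP[ezu ezv] /andP[ez'u ez'v].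
by move: nzz'; rewrite (common_in_nbr_uniq nuv ezu ez'u ezv ez'v) eqxx.
Qed.

Lemma indeg_le_card_in_nbrsD u v :
  u != v -> indeg e u <= #|in_nbrs u :\: in_nbrs v|.+1.
Proof.
move=> nuv; rewrite /indeg -/(in_nbrs u) -(cardsID (in_nbrs v)).
by have := card_in_nbrsI_le1 nuv; lia.
Qed.

Lemma card_in_nbrsD_mul_le u v :
  u != v -> #|in_nbrs u :\: in_nbrs v| * #|in_nbrs v :\: in_nbrs u| <= #|T| - 2.
Proof.
move=> nuv; rewrite -cardsX.
set P := setX (in_nbrs u :\: in_nbrs v) (in_nbrs v :\: in_nbrs u).
have arcs p : p \in P -> [/\ e p.1 u, ~~ e p.1 v, e p.2 v & ~~ e p.2 u].
  by rewrite !inE => /andP[/andP[-> ->] /andP[-> ->]].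
have neq p : p \in P -> p.1 != p.2.
  by move=> /arcs[_ xv yv _]; apply: contraNneq xv => ->.
have succ_notin p : p \in P -> common_succ p.1 p.2 \notin [set u; v].
  move=> Pp; have [_ xv yv yu] := arcs p Pp.
  have [exw eyw] := common_succ_arcs (neq p Pp).
  rewrite !inE; apply/norP; split; apply/eqP.
    by move=> def_u; move: yu; rewrite -def_u eyw.
  by move=> def_v; move: xv; rewrite -def_v exw.
have inj_succ : {in P &, injective (fun p => common_succ p.1 p.2)}.
  move=> [x y] [x' y'] Pp Pp' /= eq_succ.
  have [xu _ yv _] := arcs _ Pp; have [x'u _ y'v _] := arcs _ Pp'.
  have [exw eyw] := common_succ_arcs (neq _ Pp).
  have [ex'w ey'w] := common_succ_arcs (neq _ Pp'); rewrite -eq_succ /= in ex'w ey'w.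
  have := succ_notin _ Pp; rewrite !inE /= => /norP[wu wv].
  congr (_, _); first exact: (common_in_nbr_uniq wu exw ex'w xu x'u).
  exact: (common_in_nbr_uniq wv eyw ey'w yv y'v).
have <- : #|~: [set u; v]| = #|T| - 2.
  by rewrite -(cardsC [set u; v]) cards2 nuv addKn.
rewrite -(card_in_imset inj_succ).
apply/subset_leq_card/subsetP => _ /imsetP[p Pp ->].
by rewrite inE; apply: succ_notin.
Qed.

Lemma card_gt2 (u v : T) : loopless e -> u != v -> 2 < #|T|.
Proof.
move=> loopless_e nuv.
have [euw evw] := common_succ_arcs nuv.
have: 0 < #|~: [set u; v]|.
  apply/card_gt0P; exists (common_succ u v); rewrite !inE.
  apply/norP; split; apply/eqP => def_w; [move: euw | move: evw];
    by rewrite def_w (negbTE (loopless_e _)).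
by rewrite -(cardsC [set u; v]) cards2 nuv; lia.
Qed.

End FriendshipDigraph.

Lemma pred_mul_pred_le (a b p q n : nat) :
  2 < n -> a <= p.+1 -> b <= q.+1 -> p * q <= n - 2 ->
  ((a%:Z - 1) * (b%:Z - 1) <= n%:Z - 2)%R.
Proof.
move=> n_gt2 ap bq pqn.
case: a ap => [|a] ap; case: b bq => [|b] bq; nia.
Qed.

Theorem lemma2p6 (T : finType) (e : rel T) :
  friendship_digraph e ->
  forall u v : T, u != v ->
  (((indeg e u)%:Z - 1) * ((indeg e v)%:Z - 1) <= (#|T|)%:Z - 2)%R.
Proof.
case=> loopless_e _ common_out1 u v nuv.
apply: (pred_mul_pred_le (card_gt2 common_out1 loopless_e nuv) _ _
          (card_in_nbrsD_mul_le common_out1 nuv)).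
- exact: (indeg_le_card_in_nbrsD common_out1 nuv).
- by apply: (indeg_le_card_in_nbrsD common_out1); rewrite eq_sym.
Qed.
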